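(* Let $\nu\ge 2$, let $n_1,\dots,n_\nu\ge 1$ be integers, $N=\sum_j n_j$, let $\Omega=\coprod_{j=1}^\nu P_j$ with $\#P_j=n_j$, and let $\Delta\{n_j\}\subset\mathbb{C}[S_N]$ and $\Pi$ be as in the context. For $i\ne j$ let $r_{ij}\in S_N$ be a transposition exchanging an element of $P_i$ with an element of $P_j$, let $\mathfrak r_{ij}:=\Pi r_{ij}\Pi$ (which equals $\Xi\big(\sum_{k\ne i,j}n_kE_{kk}+(n_i-1)E_{ii}+(n_j-1)E_{jj}+E_{ij}+E_{ji}\big)$ and in particular does not depend on the choice of $r_{ij}$, and $\mathfrak r_{ij}=\mathfrak r_{ji}$), and let $\tilde{\mathfrak r}_{ij}:=n_in_j\,\mathfrak r_{ij}$. Then $$[\tilde{\mathfrak r}_{ij},\tilde{\mathfrak r}_{jk}+\tilde{\mathfrak r}_{ik}]=0\quad\text{for pairwise distinct } i,j,k,$$ $$[\tilde{\mathfrak r}_{ij},\tilde{\mathfrak r}_{kl}]=0\quad\text{for pairwise distinct } i,j,k,l,$$ where $[x,y]=xy-yx$ in $\Delta\{n_j\}$.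
   Context: $S_N$ is the permutation group of $\Omega$, $Y\{n_j\}$ the subgroup of permutations preserving each $P_j$, $\Pi=\frac{1}{\prod_j n_j!}\sum_{h\in Y\{n_j\}}h$, and $\Delta\{n_j\}=\Pi\,\mathbb{C}[S_N]\,\Pi$. For a $\nu\times\nu$ nonnegative integer matrix $A=\{a_{ij}\}$ with row sums $\sum_j a_{ij}=n_i$ and column sums $\sum_i a_{ij}=n_j$, $\xi(A)$ denotes the double coset $\{g\in S_N:\#(g(P_i)\cap P_j)=a_{ij}\ \forall i,j\}$ and $\Xi(A)=\frac{1}{\#\xi(A)}\sum_{g\in\xi(A)}g$. $E_{ij}$ is the matrix unit with $1$ in position $(i,j)$ and $0$ elsewhere. *)

From HB Require Import structures.
From mathcomp Require Import all_boot all_order all_algebra all_fingroup all_field.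
Set Implicit Arguments. Unset Strict Implicit. Unset Printing Implicit Defensive.
Import GRing.Theory Num.Theory.
Local Open Scope ring_scope.

(* Omega is an abstract finite type T, partitioned into blocks P_j = blk^-1(j),
   j : 'I_nu.  S_N = {perm T}.  The group algebra C[S_N] is modelled as
   finitely supported functions {perm T} -> algC with convolution product. *)
Section GroupAlgebra.
Variable T : finType.

Local Notation GA := {ffun {perm T} -> algC}.

Definition gel (g : {perm T}) : GA := [ffun h => (h == g)%:R].

Definition gmul (a b : GA) : GA :=
  [ffun g => \sum_(h : {perm T}) a h * b (h^-1 * g)%g].

Definition gscale (k : algC) (a : GA) : GA := [ffun g => k * a g].

Definition gcomm (a b : GA) : GA := gmul a b - gmul b a.

Variable nu : nat.
Variable blk : T -> 'I_nu.

Definition Pblock (j : 'I_nu) : {set T} := [set x | blk x == j].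
Definition nblk (j : 'I_nu) : nat := #|Pblock j|.

Definition Ysub : {set {perm T}} :=
  [set s : {perm T} | [forall x, blk (s x) == blk x]].

(* Pi = (1/prod n_j!) sum_{h in Y} h ;  #|Y| = prod_j n_j! *)
Definition Pi : GA := gscale (#|Ysub|%:R)^-1 (\sum_(h in Ysub) gel h).

Definition frakr (a b : T) : GA := gmul Pi (gmul (gel (tperm a b)) Pi).

Definition tilder (i j : 'I_nu) (a b : T) : GA :=
  gscale (nblk i * nblk j)%:R (frakr a b).

End GroupAlgebra.

From HB Require Import structures.
From mathcomp Require Import all_boot all_order all_algebra all_fingroup all_field.
Set Implicit Arguments. Unset Strict Implicit. Unset Printing Implicit Defensive.
Import GRing.Theory Num.Theory.
Local Open Scope ring_scope.

(* Let R(S1, S2) = [tsum S1 S2] be the sum of the transpositions (x y) with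
   x in S1 and y in S2.  Conjugating by an element of Y fixes Pi, and Y acts transitively
   on the transpositions between P_i and P_j, so r~_ij = Pi R(P_i, P_j) Pi.
   R(S1, S2) is invariant under conjugation by every permutation stabilising
   S1 and S2; hence R(P_i, P_j) commutes with Pi, with R(P_k, P_l), and with
   R(P_j, P_k) + R(P_i, P_k) = R(P_i u P_j, P_k).  Finally, if a commutes with
   Pi and with b, then Pi a Pi commutes with Pi b Pi because Pi is idempotent. *)

Section GroupAlgebra.
Variable T : finType.
Local Notation GA := {ffun {perm T} -> algC}.
Implicit Types (a b c : GA) (g h z : {perm T}) (S : {set T}).

Lemma gmulE a b z : gmul a b z = \sum_h a h * b (h^-1 * z)%g.
Proof. by rewrite ffunE. Qed.

Lemma gelE g z : gel g z = (z == g)%:R.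
Proof. by rewrite ffunE. Qed.

Lemma gmulA a b c : gmul (gmul a b) c = gmul a (gmul b c).
Proof.
apply/ffunP=> z; rewrite !gmulE.
under eq_bigr do rewrite gmulE mulr_suml.
rewrite exchange_big /=; apply: eq_bigr => k _.
rewrite gmulE mulr_sumr (reindex_inj (mulgI k)) /=.
by apply: eq_bigr => h _; rewrite mulKg invMg -mulgA mulrA.
Qed.

Lemma gmulDl a b c : gmul (a + b) c = gmul a c + gmul b c.
Proof.
by apply/ffunP=> z; rewrite !ffunE -big_split; apply: eq_bigr => h _; rewrite ffunE mulrDl.
Qed.

Lemma gmulDr a b c : gmul a (b + c) = gmul a b + gmul a c.
Proof.
by apply/ffunP=> z; rewrite !ffunE -big_split; apply: eq_bigr => h _; rewrite ffunE mulrDr.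
Qed.

Lemma gmul0l a : gmul 0 a = 0.
Proof. by apply/ffunP=> z; rewrite !ffunE big1 // => h _; rewrite ffunE mul0r. Qed.

Lemma gmul0r a : gmul a 0 = 0.
Proof. by apply/ffunP=> z; rewrite !ffunE big1 // => h _; rewrite ffunE mulr0. Qed.

Lemma gmul_suml (I : Type) (r : seq I) (P : pred I) (F : I -> GA) c :
  gmul (\sum_(i <- r | P i) F i) c = \sum_(i <- r | P i) gmul (F i) c.
Proof.
by apply: (big_rec2 (fun x y => gmul x c = y)) => [|i x y _ <-]; [exact: gmul0l|exact: gmulDl].
Qed.

Lemma gmul_sumr (I : Type) (r : seq I) (P : pred I) (F : I -> GA) c :
  gmul c (\sum_(i <- r | P i) F i) = \sum_(i <- r | P i) gmul c (F i).
Proof.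
by apply: (big_rec2 (fun x y => gmul c x = y)) => [|i x y _ <-]; [exact: gmul0r|exact: gmulDr].
Qed.

Lemma gmul_gelE a g z : gmul a (gel g) z = a (z * g^-1)%g.
Proof.
rewrite gmulE (bigD1 (z * g^-1)%g) //= big1 => [|h /negbTE hzg].
  by rewrite gelE invMg invgK mulgKV eqxx mulr1 addr0.
rewrite gelE; case: eqP => [hzE|]; last by rewrite mulr0.
by rewrite -hzE invMg invgK mulKVg eqxx in hzg.
Qed.

Lemma gel_gmulE a g z : gmul (gel g) a z = a (g^-1 * z)%g.
Proof.
rewrite gmulE (bigD1 g) //= big1 => [|h /negbTE hg]; last by rewrite gelE hg mul0r.
by rewrite gelE eqxx mul1r addr0.
Qed.

Lemma gel_mul g h : gmul (gel g) (gel h) = gel (g * h).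
Proof. by apply/ffunP=> z; rewrite gel_gmulE !gelE -(inj_eq (mulgI g)) mulKVg. Qed.

Lemma gscale_nat n a : gscale n%:R a = a *+ n.
Proof. by apply/ffunP=> z; rewrite !(ffunE, ffunMnE) mulr_natl. Qed.

Definition gcommute a b := gmul a b = gmul b a.

Lemma conj_invariant_gcommute a b :
  (forall g k, b g != 0 -> a (k ^ g)%g = a k) -> gcommute a b.
Proof.
(* [(a b) z] and [(b a) z] pair [b g] with [a (z g^-1)] and [a (g^-1 z)],
   which are conjugate by [g]. *)
move=> a_inv; apply/ffunP=> z; rewrite !gmulE.
rewrite [RHS](reindex_inj (h := fun k => k^-1 * z)%g) /=; last first.
  by move=> x y /mulIg /invg_inj.
apply: eq_bigr => h _; have [->|bh] := eqVneq (b (h^-1 * z)%g) 0.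
  by rewrite mulr0 mul0r.
by rewrite mulrC -(a_inv _ h bh) conjgE invMg invgK !mulgA mulgK.
Qed.

Definition tsum (S1 S2 : {set T}) : GA :=
  \sum_(x in S1) \sum_(y in S2) gel (tperm x y).

Definition preserves g S := forall x, (g x \in S) = (x \in S).

Lemma tperm_preserves (x y : T) S : (x \in S) = (y \in S) -> preserves (tperm x y) S.
Proof. by move=> xyS u; case: tpermP => [->|->|]. Qed.

Lemma tsumE (S1 S2 : {set T}) z : tsum S1 S2 z = \sum_(x in S1) \sum_(y in S2) (z == tperm x y)%:R.
Proof.
rewrite sum_ffunE; apply: eq_bigr => x _.
by rewrite sum_ffunE; apply: eq_bigr => y _; rewrite gelE.
Qed.

Lemma tsum_setUl (A B S : {set T}) :
  [disjoint A & B] -> tsum (A :|: B) S = tsum A S + tsum B S.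
Proof.
move=> AB; rewrite /tsum -bigU //; apply: eq_bigl => x.
by rewrite !inE.
Qed.

Lemma tsum_conj g (S1 S2 : {set T}) k :
  preserves g S1 -> preserves g S2 -> tsum S1 S2 (k ^ g)%g = tsum S1 S2 k.
Proof.
move=> gS1 gS2; rewrite !tsumE (reindex_inj (@perm_inj _ g)) /=.
rewrite (eq_bigl (mem S1)) => [|x]; last by rewrite /= gS1.
apply: eq_bigr => x _; rewrite (reindex_inj (@perm_inj _ g)) /=.
rewrite (eq_bigl (mem S2)) => [|y]; last by rewrite /= gS2.
by apply: eq_bigr => y _; rewrite -tpermJ (inj_eq (@conjg_inj _ g)).
Qed.

Lemma tsum_supp (S1 S2 : {set T}) g : tsum S1 S2 g != 0 ->
  exists x y, [/\ x \in S1, y \in S2 & g = tperm x y].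
Proof.
move=> nz; pose xy_of_g := [pred p : T * T | [&& p.1 \in S1, p.2 \in S2 & g == tperm p.1 p.2]].
have [[x y] /and3P[xS1 yS2 /eqP ->]|none] := pickP xy_of_g; first by exists x, y.
case/eqP: nz; rewrite tsumE big1 // => x xS1; rewrite big1 // => y yS2.
by have := none (x, y); rewrite /= xS1 yS2 /= => ->.
Qed.

Lemma gcommute_tsum (S1 S2 : {set T}) b :
  (forall g, b g != 0 -> preserves g S1 /\ preserves g S2) -> gcommute (tsum S1 S2) b.
Proof.
move=> b_pres; apply: conj_invariant_gcommute => g k /b_pres [gS1 gS2].
exact: tsum_conj.
Qed.

Lemma gcommute_tsum_tsum (S1 S2 S3 S4 : {set T}) :
  (forall x y, x \in S3 -> y \in S4 ->
     preserves (tperm x y) S1 /\ preserves (tperm x y) S2) ->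
  gcommute (tsum S1 S2) (tsum S3 S4).
Proof.
move=> tperm_pres; apply: gcommute_tsum => g /tsum_supp [x [y [xS3 yS4 ->]]].
exact: tperm_pres.
Qed.

End GroupAlgebra.

Section Blocks.
Variables (T : finType) (nu : nat) (blk : T -> 'I_nu).
Local Notation GA := {ffun {perm T} -> algC}.
Local Notation Y := (Ysub blk).
Local Notation PI := (Pi blk).
Local Notation P := (Pblock blk).
Implicit Types (a b : GA) (g h s z : {perm T}).

Lemma memY s : reflect (forall x, blk (s x) = blk x) (s \in Y).
Proof. by rewrite inE; apply: (iffP forallP) => s_blk x; apply/eqP. Qed.

Lemma Ysub_group_set : group_set Y.
Proof.
apply/group_setP; split; first by apply/memY => x; rewrite perm1.
by move=> s t /memY sY /memY tY; apply/memY => x; rewrite permM tY sY.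
Qed.

Canonical Ysub_group := group Ysub_group_set.

Lemma Y_preserves_block s j : s \in Y -> preserves s (P j).
Proof. by move=> /memY sY x; rewrite !inE sY. Qed.

Lemma tperm_Y x y : blk x = blk y -> tperm x y \in Y.
Proof. by move=> xy; apply/memY => u; case: tpermP => [->|->|]. Qed.

Lemma PiE z : PI z = #|Y|%:R^-1 * (z \in Y)%:R.
Proof.
rewrite ffunE sum_ffunE; congr (_ * _).
under eq_bigr do rewrite gelE.
have [zY|zNY] := boolP (z \in Y).
  by rewrite (bigD1 z) //= eqxx big1 ?addr0 // => h /andP[_ hz]; rewrite eq_sym (negbTE hz).
by rewrite big1 // => h hY; case: eqP => // zh; rewrite zh hY in zNY.
Qed.

Lemma Pi_gelr h : h \in Y -> gmul PI (gel h) = PI.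
Proof. by move=> hY; apply/ffunP => z; rewrite gmul_gelE !PiE groupMr ?groupV. Qed.

Lemma Pi_gell h : h \in Y -> gmul (gel h) PI = PI.
Proof. by move=> hY; apply/ffunP => z; rewrite gel_gmulE !PiE groupMl ?groupV. Qed.

Lemma Pi_idem : gmul PI PI = PI.
Proof.
apply/ffunP => z; rewrite gmulE (bigID (mem Y)) /= [X in _ + X]big1 => [|h hNY]; last first.
  by rewrite PiE (negbTE hNY) mulr0 mul0r.
rewrite addr0 (eq_bigr (fun=> #|Y|%:R^-1 * PI z)) => [|h hY]; last first.
  by rewrite !PiE hY groupMl ?groupV // mulr1.
rewrite sumr_const -mulrnAl -mulr_natr mulVf ?mul1r //.
by rewrite pnatr_eq0 -lt0n cardG_gt0.
Qed.

Definition sandwich a := gmul PI (gmul a PI).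

Lemma sandwichD a b : sandwich (a + b) = sandwich a + sandwich b.
Proof. by rewrite /sandwich gmulDl gmulDr. Qed.

Lemma sandwich_sum (I : finType) (Q : pred I) (F : I -> GA) :
  sandwich (\sum_(i in Q) F i) = \sum_(i in Q) sandwich (F i).
Proof. by rewrite /sandwich gmul_suml gmul_sumr. Qed.

Lemma sandwich_conj g h : h \in Y -> sandwich (gel (g ^ h)%g) = sandwich (gel g).
Proof.
move=> hY; rewrite /sandwich conjgE -!gel_mul !gmulA Pi_gell //.
by rewrite -gmulA Pi_gelr ?groupV.
Qed.

Lemma gcomm_sandwich a b :
  gcommute a PI -> gcommute a b -> gcomm (sandwich a) (sandwich b) = 0.
Proof.
move=> aPi ab; have sandwich_a : sandwich a = gmul PI a.
  by rewrite /sandwich aPi -gmulA Pi_idem.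
rewrite /gcomm sandwich_a /sandwich.
have -> : gmul (gmul PI a) (gmul PI (gmul b PI)) = gmul PI (gmul (gmul a b) PI).
  by rewrite -gmulA (gmulA PI a PI) aPi -(gmulA PI PI a) Pi_idem !gmulA.
have -> : gmul (gmul PI (gmul b PI)) (gmul PI a) = gmul PI (gmul (gmul b a) PI).
  by rewrite !gmulA -(gmulA PI PI a) Pi_idem aPi.
by rewrite ab subrr.
Qed.

Lemma gcommute_tsum_Pi i j : gcommute (tsum (P i) (P j)) PI.
Proof.
apply: gcommute_tsum => g; rewrite PiE mulf_eq0 negb_or pnatr_eq0 eqb0 negbK.
by case/andP=> _ gY; split; apply: Y_preserves_block.
Qed.

Lemma sandwich_tperm_blocks i j (a b x y : T) : i != j ->
  blk a = i -> blk b = j -> blk x = i -> blk y = j ->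
  sandwich (gel (tperm x y)) = sandwich (gel (tperm a b)).
Proof.
move=> ij ai bj xi yj.
have neq_blk (u v : T) : blk u != blk v -> u != v by apply: contraNneq => ->.
have ab : a != b by apply: neq_blk; rewrite ai bj.
have xb : x != b by apply: neq_blk; rewrite xi bj.
have yx : y != x by apply: neq_blk; rewrite xi yj eq_sym.
have -> : tperm x y = ((tperm a b ^ tperm a x) ^ tperm b y)%g.
  by rewrite !tpermJ tpermL (tpermD ab xb) tpermL tpermD // eq_sym.
by rewrite !sandwich_conj // tperm_Y // (ai, bj).
Qed.

Lemma tilder_tsum i j (a b : T) : i != j -> blk a = i -> blk b = j ->
  tilder blk i j a b = sandwich (tsum (P i) (P j)).
Proof.
move=> ij ai bj; rewrite sandwich_sum.
rewrite (eq_bigr (fun=> sandwich (gel (tperm a b)) *+ #|P j|)) => [|x]; last first.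
  rewrite inE => /eqP xi; rewrite sandwich_sum -sumr_const.
  by apply: eq_bigr => y; rewrite inE => /eqP yj; apply: sandwich_tperm_blocks ij ai bj xi yj.
by rewrite sumr_const -mulrnA /tilder gscale_nat mulnC; apply: erefl.
Qed.

Lemma tperm_preserves_block (x y : T) k :
  blk x != k -> blk y != k -> preserves (tperm x y) (P k).
Proof. by move=> xk yk; apply: tperm_preserves; rewrite !inE (negbTE xk) (negbTE yk). Qed.

Lemma disjoint_blocks i j : i != j -> [disjoint P i & P j].
Proof.
move=> ij; rewrite -setI_eq0; apply/eqP/setP => x; rewrite !inE.
by apply: contraNF ij => /andP[/eqP <-].
Qed.

End Blocks.

Theorem theorem2 (nu : nat) (T : finType) (blk : T -> 'I_nu) :
  (2 <= nu)%N ->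
  (forall j : 'I_nu, (0 < nblk blk j)%N) ->
  (forall (i j k : 'I_nu) (a b c d e f : T),
      i != j -> j != k -> i != k ->
      blk a = i -> blk b = j ->
      blk c = j -> blk d = k ->
      blk e = i -> blk f = k ->
      gcomm (tilder blk i j a b)
            (tilder blk j k c d + tilder blk i k e f) = 0)
  /\
  (forall (i j k l : 'I_nu) (a b c d : T),
      i != j -> i != k -> i != l -> j != k -> j != l -> k != l ->
      blk a = i -> blk b = j -> blk c = k -> blk d = l ->
      gcomm (tilder blk i j a b) (tilder blk k l c d) = 0).
Proof.
move=> _ _; split=> [i j k a b c d e f ij jk ik ai bj cj dk ei fk
                    |i j k l a b c d ij ik il jk jl kl ai bj ck dl].
  rewrite (tilder_tsum ij ai bj) (tilder_tsum jk cj dk) (tilder_tsum ik ei fk).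
  rewrite -sandwichD -tsum_setUl; last by rewrite disjoint_blocks // eq_sym.
  apply: gcomm_sandwich; first exact: gcommute_tsum_Pi.
  apply/esym/gcommute_tsum_tsum => x y; rewrite !inE => /eqP xi /eqP yj; split.
    by apply: tperm_preserves; rewrite !inE xi yj !eqxx orbT.
  by apply: tperm_preserves_block; rewrite ?xi ?yj.
rewrite (tilder_tsum ij ai bj) (tilder_tsum kl ck dl).
apply: gcomm_sandwich; first exact: gcommute_tsum_Pi.
apply/esym/gcommute_tsum_tsum => x y; rewrite !inE => /eqP xi /eqP yj.
by split; apply: tperm_preserves_block; rewrite ?xi ?yj.
Qed.
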